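(* Let $(A,\cdot,\alpha)$ be a nearly Hom-associative algebra over a field $\mathbb{K}$ of characteristic $0$, let $V$ be a finite-dimensional linear space over $\mathbb{K}$, and let $l,r:A\to\mathrm{End}(V)$ be linear maps and $\varphi\in\mathrm{End}(V)$ such that $(l,r,V,\varphi)$ is a bimodule of $(A,\cdot,\alpha)$. Then the linear map $l-r:A\to\mathrm{End}(V)$, $x\mapsto l(x)-r(x)$, is a representation of the underlying Hom-Lie algebra $(A,[\cdot,\cdot],\alpha)$, $[x,y]=x\cdot y-y\cdot x$, on $V$ with respect to $\varphi$; i.e. for all $x,y\in A$: $(l-r)(\alpha(x))\circ\varphi=\varphi\circ(l-r)(x)$ and $(l-r)([x,y])\circ\varphi=(l-r)(\alpha(x))\circ(l-r)(y)-(l-r)(\alpha(y))\circ(l-r)(x)$.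
   Context: A nearly Hom-associative algebra is a triple $(A,\cdot,\alpha)$ with bilinear product $\cdot$ and linear $\alpha:A\to A$ such that $\alpha(x)\cdot(y\cdot z)=(z\cdot x)\cdot\alpha(y)$ for all $x,y,z$; its commutator bracket gives a Hom-Lie algebra $(A,[\cdot,\cdot],\alpha)$. A bimodule of $(A,\cdot,\alpha)$ is a quadruple $(l,r,V,\varphi)$ with $V$ a linear space, $l,r:A\to\mathrm{End}(V)$ linear and $\varphi\in\mathrm{End}(V)$ such that for all $x,y\in A$: $\varphi\circ l(x)=l(\alpha(x))\circ\varphi$, $\varphi\circ r(x)=r(\alpha(x))\circ\varphi$, $l(\alpha(x))\circ l(y)=r(\alpha(y))\circ r(x)$, $l(\alpha(x))\circ r(y)=l(y\cdot x)\circ\varphi$, $r(\alpha(x))\circ l(y)=r(x\cdot y)\circ\varphi$. A representation of a Hom-Lie algebra $(\mathcal G,[\cdot,\cdot],\alpha)$ on $V$ with respect to $\psi\in\mathrm{End}(V)$ is a linear map $\rho:\mathcal G\to\mathrm{End}(V)$ with $\rho(\alpha(x))\circ\psi=\psi\circ\rho(x)$ and $\rho([x,y])\circ\psi=\rho(\alpha(x))\circ\rho(y)-\rho(\alpha(y))\circ\rho(x)$. *)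

From HB Require Import structures.
From mathcomp Require Import all_boot all_order all_algebra.
From mathcomp Require Import sesquilinear.
Set Implicit Arguments. Unset Strict Implicit. Unset Printing Implicit Defensive.
Import GRing.Theory.
Local Open Scope ring_scope.

Definition nearly_hom_assoc (K : fieldType) (A : lmodType K)
  (mul : A -> A -> A) (alpha : A -> A) : Prop :=
  forall x y z : A, mul (alpha x) (mul y z) = mul (mul z x) (alpha y).

Definition is_bimodule (K : fieldType) (A : lmodType K) (V : vectType K)
  (mul : A -> A -> A) (alpha : A -> A)
  (l r : A -> 'End(V)) (phi : 'End(V)) : Prop :=
  forall x y : A,
  [/\ (phi \o l x)%VF = (l (alpha x) \o phi)%VF,
      (phi \o r x)%VF = (r (alpha x) \o phi)%VF,
      (l (alpha x) \o l y)%VF = (r (alpha y) \o r x)%VF,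
      (l (alpha x) \o r y)%VF = (l (mul y x) \o phi)%VF &
      (r (alpha x) \o l y)%VF = (r (mul x y) \o phi)%VF].

Definition commutator (K : fieldType) (A : lmodType K) (mul : A -> A -> A)
  (x y : A) : A := mul x y - mul y x.

Definition is_homlie_rep (K : fieldType) (G : lmodType K) (V : vectType K)
  (br : G -> G -> G) (alpha : G -> G)
  (rho : G -> 'End(V)) (psi : 'End(V)) : Prop :=
  forall x y : G,
    (rho (alpha x) \o psi)%VF = (psi \o rho x)%VF /\
    (rho (br x y) \o psi)%VF =
      (rho (alpha x) \o rho y)%VF - (rho (alpha y) \o rho x)%VF.

From mathcomp Require Import all_boot all_order all_algebra.
From mathcomp Require Import sesquilinear.
Import GRing.Theory.
Local Open Scope ring_scope.

(* Expanding (l - r)([x, y]) \o phi by additivity, the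
   last two axioms turn each of its four terms into a mixed product
   l(alpha _) \o r _ or r(alpha _) \o l _.  On the right-hand side the third
   axiom rewrites the pure products l(alpha x) \o l y as r(alpha y) \o r x,
   after which all pure products cancel and the mixed ones agree. *)

Lemma comp_lfunBB (R : nzRingType) (aT vT rT : vectType R)
    (f g : 'Hom(vT, rT)) (h k : 'Hom(aT, vT)) :
  ((f - g) \o (h - k) = ((f \o h) + (g \o k)) - ((f \o k) + (g \o h)))%VF.
Proof.
rewrite !(comp_lfunDl, comp_lfunDr, comp_lfunNl, comp_lfunNr).
by rewrite opprK [- _ + _]addrC addrACA -opprD.
Qed.

Section BimoduleDifference.

Context {K : fieldType} {A : lmodType K} {V : vectType K}.
Context {mul : A -> A -> A} {alpha : A -> A}.
Context {l r : {additive A -> 'End(V)}} {phi : 'End(V)}.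
Hypothesis bimod : is_bimodule mul alpha l r phi.

Lemma bimodule_sub_twist x :
  ((l (alpha x) - r (alpha x)) \o phi)%VF = (phi \o (l x - r x))%VF.
Proof.
have [phi_l phi_r _ _ _] := bimod x x.
by rewrite comp_lfunDl comp_lfunDr comp_lfunNl comp_lfunNr phi_l phi_r.
Qed.

Lemma bimodule_sub_commutator x y :
  ((l (commutator mul x y) - r (commutator mul x y)) \o phi)%VF =
    ((l (alpha x) - r (alpha x)) \o (l y - r y))%VF
  - ((l (alpha y) - r (alpha y)) \o (l x - r x))%VF.
Proof.
have [_ _ ll_xy lr_xy rl_xy] := bimod x y.
have [_ _ ll_yx lr_yx rl_yx] := bimod y x.
transitivity (((l (alpha y) \o r x) + (r (alpha y) \o l x))
              - ((l (alpha x) \o r y) + (r (alpha x) \o l y)))%VF.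
- rewrite /commutator !raddfB !(comp_lfunDl, comp_lfunNl).
  by rewrite -lr_xy -lr_yx -rl_xy -rl_yx opprK [- _ + _]addrC addrACA -opprD.
- rewrite !comp_lfunBB ll_xy ll_yx [((r (alpha x) \o r y) + _)%VF]addrC.
  by rewrite opprB [RHS]addrC subrKA.
Qed.

End BimoduleDifference.

Theorem mainTheorem12 (K : fieldType) (charK0 : [pchar K] =i pred0)
  (A : lmodType K) (mul : {bilinear A -> A -> A}) (alpha : {linear A -> A})
  (V : vectType K) (l r : {linear A -> 'End(V)}) (phi : 'End(V)) :
  nearly_hom_assoc mul alpha ->
  is_bimodule mul alpha l r phi ->
  is_homlie_rep (commutator mul) alpha (fun x => l x - r x) phi.
Proof.
move=> _ bimod x y; split.
- exact: bimodule_sub_twist bimod x.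
- exact: bimodule_sub_commutator bimod x y.
Qed.
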